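(* Let $x,y$ be non-commuting indeterminates and $C=xyx^{-1}y^{-1}$. Let $(R_n)_{n\in\mathbb Z}$ be the solution of $$R_{n+1}CR_{n-1}=R_n^2+1\qquad(n\in\mathbb Z)$$ with $R_0=yxy^{-1}$ and $R_1=y$. Put $$y_1=y^2x^{-1}y^{-1},\qquad y_2=x^{-1}y^{-1},\qquad y_3=xy^{-1}.$$ Then for all $n\ge 0$, $R_nR_0^{-1}$ equals the sum, over all paths on $\{0,1,2,3\}$ with $2n$ steps of the form $i\to i\pm1$ that start and end at $0$, of the weight of the path. The weight of a path is the product, from left to right in the order the steps are taken, of the factor $1$ for each step $i\to i+1$ and the factor $y_i$ for each step $i\to i-1$.
   Context: Work in the free skew field (non-commutative rational functions) over $\mathbb C$ generated by $x,y$. *)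

From mathcomp Require Import all_boot all_order all_algebra.
Set Implicit Arguments. Unset Strict Implicit. Unset Printing Implicit Defensive.
Import GRing.Theory.
Local Open Scope ring_scope.

Definition is_division_ring (D : unitRingType) : Prop :=
  forall a : D, a != 0 -> a \is a GRing.unit.

Definition Cxy (D : unitRingType) (x y : D) : D := x * y * x^-1 * y^-1.

Definition is_R_solution (D : unitRingType) (x y : D) (R : int -> D) : Prop :=
  [/\ R 0 = y * x * y^-1, R 1 = y &
      forall n : int, R (n + 1) * Cxy x y * R (n - 1) = R n ^+ 2 + 1].

Definition ywt (D : unitRingType) (x y : D) (i : nat) : D :=
  match i with
  | 1 => y ^+ 2 * x^-1 * y^-1
  | 2 => x^-1 * y^-1
  | 3 => x * y^-1
  | _ => 0
  end.

(* A path with m steps on {0,1,2,3}: its sequence of m+1 visited vertices. *)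
Definition pvert (m : nat) (p : {ffun 'I_m.+1 -> 'I_4}) (k : nat) : nat :=
  nat_of_ord (p (inord k)).

Definition is_Dyck_walk (n : nat) (p : {ffun 'I_(2 * n).+1 -> 'I_4}) : bool :=
  [&& pvert p 0 == 0%N, pvert p (2 * n) == 0%N &
      [forall k : 'I_(2 * n),
        (pvert p k.+1 == (pvert p k).+1) || (pvert p k == (pvert p k.+1).+1)]].

Definition step_wt (D : unitRingType) (x y : D) (a b : nat) : D :=
  if b == a.+1 then 1 else ywt x y a.

Definition path_wt (D : unitRingType) (x y : D) (n : nat)
    (p : {ffun 'I_(2 * n).+1 -> 'I_4}) : D :=
  \prod_(k < 2 * n) step_wt x y (pvert p k) (pvert p k.+1).

(* The walk sum is computed by the transfer matrix of the step weights: the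
   sums T_m(j) of the walks of length m from 0 to j satisfy
   T_(m+1)(j) = sum_i T_m(i) w(i, j).  Two steps of this recursion show that
   the pair (T_2k(0), T_2k(2)) is (R_k R_0^-1, R_(k+1) x - R_k y), provided
   that R satisfies a three-term LINEAR recurrence.  That linear recurrence is
   extracted from the nonlinear one: the recurrence forces
   R_k R_(k+1) = R_(k+1) C R_k, and then R_(k+1)^-1 (R_(k+2) C + R_k) does not
   depend on k. *)

From mathcomp Require Import all_boot all_order all_algebra.
Import GRing.Theory.
Set Implicit Arguments. Unset Strict Implicit. Unset Printing Implicit Defensive.
Local Open Scope ring_scope.

Lemma prodr_nat_eq0 (D : pzSemiRingType) (F : nat -> D) m k :
  (k < m)%N -> F k = 0 -> \prod_(i < m) F i = 0.
Proof.
elim: m => // m IHm; rewrite ltnS leq_eqVlt big_ord_recr /= => /predU1P[-> -> | ltkm Fk0].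
  by rewrite mulr0.
by rewrite IHm ?mul0r.
Qed.

Section Walks.

Variables (D : pzSemiRingType) (w : nat -> nat -> D).

Definition walk_wt m (p : {ffun 'I_m.+1 -> 'I_4}) : D :=
  \prod_(k < m) w (pvert p k) (pvert p k.+1).

Definition walk_sum m j : D :=
  \sum_(p : {ffun 'I_m.+1 -> 'I_4} | (pvert p 0 == 0%N) && (pvert p m == j)) walk_wt p.

Definition walk_rcons m (pt : {ffun 'I_m.+1 -> 'I_4} * 'I_4) : {ffun 'I_m.+2 -> 'I_4} :=
  [ffun i : 'I_m.+2 => if (i < m.+1)%N then pt.1 (inord i) else pt.2].

Definition walk_unrcons m (p : {ffun 'I_m.+2 -> 'I_4}) : {ffun 'I_m.+1 -> 'I_4} * 'I_4 :=
  ([ffun i : 'I_m.+1 => p (inord i)], p ord_max).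

Lemma walk_rconsK m : cancel (@walk_rcons m) (@walk_unrcons m).
Proof.
case=> p t; rewrite /walk_unrcons /walk_rcons; congr pair; last by rewrite ffunE /= ltnn.
apply/ffunP=> i; rewrite !ffunE inordK ?(ltn_ord i) //; last exact: leqW.
by congr (p _); apply: val_inj; rewrite /= inordK.
Qed.

Lemma walk_unrconsK m : cancel (@walk_unrcons m) (@walk_rcons m).
Proof.
move=> p; apply/ffunP=> i; rewrite /walk_unrcons /walk_rcons !ffunE /=.
case: ifP => [lt_i_m1 | /negbT]; rewrite ?ffunE; [| rewrite -leqNgt => le_m1_i];
  congr (p _); apply: val_inj => /=.
  by rewrite !inordK // ltnW.
by apply/eqP; rewrite eqn_leq le_m1_i -ltnS ltn_ord.
Qed.

Lemma pvert_walk_rcons m p t k :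
  (k <= m)%N -> pvert (@walk_rcons m (p, t)) k = pvert p k.
Proof. by move=> le_k_m; rewrite /pvert ffunE inordK ?ltnS ?le_k_m ?leqW. Qed.

Lemma pvert_walk_rcons_last m p t : pvert (@walk_rcons m (p, t)) m.+1 = t.
Proof. by rewrite /pvert ffunE inordK // ltnn. Qed.

Lemma walk_wt_rcons m p t :
  walk_wt (@walk_rcons m (p, t)) = walk_wt p * w (pvert p m) t.
Proof.
rewrite /walk_wt big_ord_recr /= pvert_walk_rcons_last pvert_walk_rcons //.
by congr (_ * _); apply: eq_bigr => k _; rewrite !pvert_walk_rcons // ltnW.
Qed.

Lemma walk_sum0 j : walk_sum 0 j = (j == 0%N)%:R.
Proof.
rewrite /walk_sum; have [-> | j_neq0] := eqVneq j 0%N; last first.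
  rewrite big_pred0 // => p; apply/negbTE/andP => -[/eqP-> /eqP j0].
  by rewrite j0 eqxx in j_neq0.
rewrite (big_pred1 [ffun => ord0]) /walk_wt ?big_ord0 // => p /=.
rewrite andbb; apply/eqP/eqP => [p0 | ->]; last by rewrite /pvert ffunE.
apply/ffunP => i; rewrite ffunE (ord1 i); apply: val_inj; move: p0; rewrite /pvert.
by have -> : (inord 0 : 'I_1) = ord0 by apply: val_inj; rewrite /= inordK.
Qed.

Lemma walk_sumS m j : (j < 4)%N ->
  walk_sum m.+1 j = \sum_(i < 4) walk_sum m i * w i j.
Proof.
move=> lt_j4; rewrite /walk_sum.
rewrite (reindex (@walk_rcons m)); last first.
  by exists (@walk_unrcons m) => p _; [apply: walk_rconsK | apply: walk_unrconsK].
rewrite -(pair_big_dep xpredT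
  (fun p t => (pvert (@walk_rcons m (p, t)) 0 == 0%N) && (pvert (walk_rcons (p, t)) m.+1 == j))
  (fun p t => walk_wt (walk_rcons (p, t)))) /=.
under eq_bigr do under eq_bigl do rewrite pvert_walk_rcons // pvert_walk_rcons_last.
under eq_bigr do under eq_bigr do rewrite walk_wt_rcons.
under [RHS]eq_bigr do rewrite mulr_suml big_mkcond.
rewrite [RHS]exchange_big /=; apply: eq_bigr => p _.
have [p0 | _] /= := eqVneq (pvert p 0) 0%N; last by rewrite big_pred0_eq big1_eq.
rewrite (big_pred1 (Ordinal lt_j4)) // (bigD1 (p (inord m))) //= /pvert eqxx big1 ?addr0 //.
by move=> i ne_i; case: eqP => // /val_inj eq_i; rewrite eq_i eqxx in ne_i.
Qed.

End Walks.

(* Unlike [step_wt], zero on steps other than +-1, so that [walk_sum] only sees Dyck walks. *)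
Definition dyck_step (D : unitRingType) (x y : D) (a b : nat) : D :=
  if b == a.+1 then 1 else if a == b.+1 then ywt x y a else 0.

Lemma dyck_walk_sumE (D : unitRingType) (x y : D) n :
  \sum_(p : {ffun 'I_(2 * n).+1 -> 'I_4} | is_Dyck_walk p) path_wt x y p
  = walk_sum (dyck_step x y) (2 * n) 0.
Proof.
rewrite /walk_sum big_mkcond [RHS]big_mkcond; apply: eq_bigr => p _.
rewrite /is_Dyck_walk; case: (pvert p 0 == 0%N); case: (pvert p (2 * n) == 0%N) => //=.
case: forallP => [steps | /forallP]; last rewrite negb_forall => /existsP[k].
  apply: eq_bigr => k _; rewrite /dyck_step /step_wt; case: ifP => // not_up.
  by have := steps k; rewrite not_up /= => ->.
rewrite negb_or => /andP[/negbTE not_up /negbTE not_down].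
by rewrite /walk_wt (@prodr_nat_eq0 _ (fun i => dyck_step x y (pvert p i) (pvert p i.+1)) _ k)
  // /dyck_step not_up not_down.
Qed.

Lemma dyck_walk_sumS (D : unitRingType) (x y : D) m :
  let T := walk_sum (dyck_step x y) in
  [/\ T m.+1 0 = T m 1 * ywt x y 1, T m.+1 1 = T m 0 + T m 2 * ywt x y 2,
      T m.+1 2 = T m 1 + T m 3 * ywt x y 3 & T m.+1 3 = T m 2].
Proof.
by split; rewrite walk_sumS // !big_ord_recr big_ord0 /= /dyck_step /=
  ?(mulr0, mulr1, add0r, addr0).
Qed.

Lemma dyck_walk_sumSS (D : unitRingType) (x y : D) m :
  let T := walk_sum (dyck_step x y) in
  T m.+2 0 = (T m 0 + T m 2 * ywt x y 2) * ywt x y 1 /\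
  T m.+2 2 = T m 0 + T m 2 * (ywt x y 2 + ywt x y 3).
Proof.
have [S0 _ S2 _] := dyck_walk_sumS x y m.+1; have [_ S1 _ S3] := dyck_walk_sumS x y m.
by rewrite /= S0 S2 S3 S1 mulrDr addrA.
Qed.

Section LinearizedRecurrence.

Variables (D : unitRingType) (C : D) (r : nat -> D).
Hypotheses (C_unit : C \is a GRing.unit) (r_unit : forall k, r k \is a GRing.unit).
Hypothesis r_rec : forall k, r k.+2 * C * r k = r k.+1 ^+ 2 + 1.
Hypothesis r_comm0 : r 0 * r 1 = r 1 * C * r 0.

Lemma rec_comm k : r k * r k.+1 = r k.+1 * C * r k.
Proof.
elim: k => [// | k IHk].
have rCr_unit : C * r k \is a GRing.unit by rewrite unitrMl.
apply: (mulIr rCr_unit).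
rewrite -[r k.+2 * C * r k.+1 * _]mulrA [r k.+1 * (C * r k)]mulrA -IHk.
rewrite !mulrA -[_ * C * r k]mulrA -[_ * (C * r k)]mulrA [r k.+2 * _]mulrA r_rec.
by rewrite mulrDr mulrDl mulr1 mul1r -exprS -exprSr.
Qed.

Lemma rec_linear k : r k.+2 * C + r k = r k.+1 * ((r 1)^-1 * (r 2 * C + r 0)).
Proof.
set K := _^-1 * _.
elim: k => [| k IHk]; first by rewrite /K mulVKr.
have K_r : K * r k.+1 = r k.+2 + C * r k.
  apply: (mulrI (r_unit k.+1)).
  by rewrite mulrA -IHk mulrDl rec_comm mulrDr -rec_comm !mulrA.
apply: (mulIr (r_unit k.+1)).
rewrite mulrDl r_rec -mulrA K_r mulrDr (mulrA (r k.+2)) r_rec -expr2.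
by rewrite addrAC addrA.
Qed.

End LinearizedRecurrence.

Section RSolution.

Variables (D : unitRingType) (x y : D) (R : int -> D).
Hypotheses (x_unit : x \is a GRing.unit) (y_unit : y \is a GRing.unit).
Hypotheses (R_unit : forall n, R n \is a GRing.unit) (R_sol : is_R_solution x y R).

Lemma R0E : R 0 = y * x * y^-1. Proof. by case: R_sol. Qed.
Lemma R1E : R 1 = y. Proof. by case: R_sol. Qed.

Lemma R_nat_rec k : R k.+2%:Z * Cxy x y * R k%:Z = R k.+1%:Z ^+ 2 + 1.
Proof.
case: R_sol => _ _ /(_ k.+1%:Z).
have -> : k.+1%:Z + 1 = k.+2%:Z by rewrite -[k.+2]addn1 PoszD.
by have -> : k.+1%:Z - 1 = k%:Z by rewrite intS [1 + _]addrC addrK.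
Qed.

Lemma Cxy_unit : Cxy x y \is a GRing.unit.
Proof. by rewrite /Cxy !unitrMl ?unitrV. Qed.

Lemma Cxy_R0 : Cxy x y * R 0 = x.
Proof.
by rewrite R0E /Cxy !mulrA ?(mulrVK y_unit, mulrK y_unit, mulrVK x_unit, mulrK x_unit).
Qed.

Lemma R_comm0 : R 0 * R 1 = R 1 * Cxy x y * R 0.
Proof. by rewrite -mulrA Cxy_R0 R0E R1E mulrVK. Qed.

Lemma R_linear_rec k :
  R k.+2%:Z * x = R k.+1%:Z * (y + y^-1 + x * x * y^-1) - R k%:Z * (y * x * y^-1).
Proof.
have lin := rec_linear Cxy_unit (fun k => R_unit k%:Z) R_nat_rec R_comm0 k.
have K_R0 : (R 1%:Z)^-1 * (R 2%:Z * Cxy x y + R 0%:Z) * R 0%:Z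
             = y + y^-1 + x * x * y^-1.
  by rewrite -mulrA mulrDl R_nat_rec R1E R0E expr2 !mulrDr mulr1 !mulrA
    ?(mulVr y_unit, mul1r, mulrVK y_unit).
rewrite -{1}Cxy_R0 mulrA -[R k.+2%:Z * _](addrK (R k%:Z)) lin mulrBl.
by rewrite -(mulrA (R k.+1%:Z)) K_R0 R0E.
Qed.

Lemma dyck_walk_sum_even k :
  walk_sum (dyck_step x y) (2 * k) 0 = R k%:Z * (R 0)^-1 /\
  walk_sum (dyck_step x y) (2 * k) 2 = R k.+1%:Z * x - R k%:Z * y.
Proof.
have R0V : (R 0)^-1 = y * x^-1 * y^-1.
  by rewrite R0E !invrM ?invrK ?unitrV ?unitrMl // mulrA.
elim: k => [|k [T0 T2]].
  by rewrite !walk_sum0 divrr // R0E R1E mulrVK // subrr.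
have [S0 S2] := dyck_walk_sumSS x y (2 * k).
rewrite mulnS S0 S2 T0 T2 R0V /ywt expr2.
split.
  rewrite !mulrDl !mulNr !mulrA ?(mulrK x_unit, mulrVK x_unit, mulrK y_unit, mulrVK y_unit).
  by rewrite addrC subrK.
rewrite R_linear_rec !mulrDr !mulrDl ?mulrN ?mulNr !mulrA
  ?(mulrK x_unit, mulrVK x_unit, mulrK y_unit, mulrVK y_unit).
by rewrite addrA subrKC -2!(addrA (R k.+1%:Z * y)) [R k.+1%:Z * y + _]addrC addrK addrA.
Qed.
End RSolution.


Theorem theorem3p5 (D : unitRingType) (hD : is_division_ring D)
    (hchar : [pchar D] =i pred0)
    (x y : D) (hx : x \is a GRing.unit) (hy : y \is a GRing.unit)
    (R : int -> D) (hRu : forall n : int, R n \is a GRing.unit)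
    (hR : is_R_solution x y R) :
  forall n : nat,
    R (n%:Z) * (R 0)^-1 =
    \sum_(p : {ffun 'I_(2 * n).+1 -> 'I_4} | is_Dyck_walk p) path_wt x y p.
Proof.
move=> n; rewrite dyck_walk_sumE.
by have [-> _] := dyck_walk_sum_even hx hy hRu hR n.
Qed.
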